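(* Let $\mathcal{T}$ be an MPQ-tree of an interval graph $G=(V,E)$, let $(x,y)\in E$ with $x$ over $y$ and $node(x)\neq node(y)$. If the $\langle x,y\rangle$-tree-path is not almost rotable, then $(x,y)$ is not an interval edge.
   Context: Graphs are finite and simple; for $G=(V,E)$ and $e\in E$, $G-e=(V,E\setminus\{e\})$. An edge $(x,y)\in E$ of an interval graph $G$ is an interval edge if $G-(x,y)$ is an interval graph. An MPQ-tree of an interval graph $G=(V,E)$, $V=\{1,\dots,n\}$, is a rooted plane tree whose nodes are P-nodes and Q-nodes. Each P-node carries a (possibly empty) set of vertices. A Q-node has $k\ge 3$ ordered positions $1,\dots,k$; position $i$ carries a set $S_i\subseteq V$ (the $i$-th section) and a child subtree $T_i$, which may be empty. Every vertex $v$ is assigned to exactly one node $node(v)$: either $v$ lies in the set of the P-node $node(v)$, or $node(v)$ is a Q-node and $v$ lies exactly in the sections $S_{l(v)},\dots,S_{r(v)}$ of it, with $l(v)<r(v)$. For a node with child subtrees $T_1,\dots,T_k$, $V_i$ denotes the set of vertices assigned to nodes of $T_i$ ($V_i=\emptyset$ if $T_i$ is empty). The maximal cliques of $G$ are in bijection with the descending paths from the root which at a P-node continue into one of its children (stopping if there is none) and at a Q-node choose a position $i$ and continue into $T_i$ (stopping if $T_i$ is empty); the clique is the union of the sets of the visited P-nodes and the chosen sections. Reading these cliques left to right gives a linear order of the maximal cliques, and the orders obtained this way after arbitrarily permuting children of P-nodes and reversing the positions of Q-nodes are exactly the orders of the maximal cliques of $G$ in which the cliques containing any fixed vertex are consecutive.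 Moreover, for every Q-node with sections $S_1,\dots,S_k$: (a) $V_1\neq\emptyset$ and $V_k\ne\emptyset$; (b) $S_1\subseteq S_2$ and $S_k\subseteq S_{k-1}$; (c) $S_{i-1}\cap S_i\neq\emptyset$ for $2\le i\le k$; (d) $S_{i-1}\neq S_i$ for $2\le i\le k$; (e) $(S_i\cap S_{i+1})\setminus S_1\neq\emptyset$ and $(S_{i-1}\cap S_i)\setminus S_k\neq\emptyset$ for $2\le i\le k-1$; (f) $(S_{i-1}\cup V_{i-1})\setminus S_i\neq\emptyset$ and $(S_i\cup V_i)\setminus S_{i-1}\neq\emptyset$ for $2\le i\le k$; and further (g) no empty P-node has an empty P-node as its parent, (h) no P-node has exactly one child whose root is a P-node, (i) every child subtree of a P-node is nonempty. We say $x$ is over $y$ if $node(x)$ is the lowest common ancestor of $node(x)$ and $node(y)$ in $\mathcal{T}$. For $x$ over $y$ with $node(x)\ne node(y)$, the $\langle x,y\rangle$-tree-path is the tree path $node(x)=n_1,n_2,\dots,n_t=node(y)$. For a Q-node with sections $S_1,\dots,S_k$, section $S_a$ is central if $1<a<k$. The path goes through a central section if for some $1<i<t$, $n_i$ is a Q-node and $n_{i+1}$ lies in the subtree $T_a$ of a central section $S_a$ of $n_i$. The path is almost rotable if it does not go through a central section and $n_t$ is a P-node that is a leaf of $\mathcal{T}$. *)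

From Stdlib Require Import Permutation.
From HB Require Import structures.
From mathcomp Require Import all_boot.

Set Implicit Arguments.
Unset Strict Implicit.
Unset Printing Implicit Defensive.

Section Graphs.
Variable V : finType.

(* A finite simple graph on V is an irreflexive symmetric relation adj. *)

(* Interval graph: intersection graph of closed intervals [l u, r u]
   (integer endpoints suffice for finite graphs). *)
Definition is_interval_graph (adj : rel V) : Prop :=
  exists l r : V -> nat,
    (forall u, l u <= r u) /\
    (forall u v, u != v -> (adj u v <-> (l u <= r v) /\ (l v <= r u))).

Definition remove_edge (adj : rel V) (x y : V) : rel V :=
  fun u v => adj u v && ~~ (((u == x) && (v == y)) || ((u == y) && (v == x))).

Definition interval_edge (adj : rel V) (x y : V) : Prop :=
  adj x y /\ is_interval_graph (remove_edge adj x y).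

Definition is_clique (adj : rel V) (K : {set V}) : Prop :=
  forall u v, u \in K -> v \in K -> u != v -> adj u v.

Definition is_maxclique (adj : rel V) (K : {set V}) : Prop :=
  is_clique adj K /\ forall K', is_clique adj K' -> K \subset K' -> K' = K.

Definition consecutive_order (adj : rel V) (L : seq {set V}) : Prop :=
  uniq L /\ (forall C, C \in L <-> is_maxclique adj C) /\
  forall v i j k, i <= j -> j <= k -> k < size L ->
    v \in nth set0 L i -> v \in nth set0 L k -> v \in nth set0 L j.

End Graphs.

(* PNode S cs : a P-node carrying the set S with ordered children cs
                (every child subtree is nonempty).
   QNode ss   : a Q-node whose i-th position (0-based) carries the section
                (ss`_i).1 and the (possibly empty) child subtree (ss`_i).2. *)
Inductive mpq (V : finType) : Type :=
| PNode : {set V} -> seq (mpq V) -> mpq V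
| QNode : seq ({set V} * option (mpq V)) -> mpq V.

Arguments PNode {V}.
Arguments QNode {V}.

Section Trees.
Variable V : finType.
Implicit Types (t : mpq V) (a : seq nat).

(* Nodes are addressed by the sequence of child indices (for a P-node) /
   positions (for a Q-node) from the root. *)
Fixpoint subt t a {struct a} : option (mpq V) :=
  match a with
  | [::] => Some t
  | i :: a' =>
    match t with
    | PNode _ cs => obind (fun c => subt c a') (onth cs i)
    | QNode ss => obind (fun sc => obind (fun c => subt c a') sc.2) (onth ss i)
    end
  end.

Definition section (ss : seq ({set V} * option (mpq V))) (i : nat) : {set V} :=
  (nth (set0, None) ss i).1.

Definition inode t a (v : V) : Prop :=
  (exists S cs, subt t a = Some (PNode S cs) /\ v \in S) \/
  (exists ss, subt t a = Some (QNode ss) /\ exists i, i < size ss /\ v \in section ss i).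

(* clique of a descending path from the root *)
Fixpoint cliq t (p : seq nat) {struct p} : option {set V} :=
  match p, t with
  | [::], PNode X [::] => Some X
  | [::], _ => None
  | i :: p', PNode X cs => obind (fun c => omap (setU X) (cliq c p')) (onth cs i)
  | i :: p', QNode ss =>
    match onth ss i with
    | Some (Si, None) => if p' is [::] then Some Si else None
    | Some (Si, Some c) => omap (setU Si) (cliq c p')
    | None => None
    end
  end.

Inductive ord : mpq V -> seq {set V} -> Prop :=
| ordPleaf X : ord (PNode X [::]) [:: X]
| ordP X cs cs' L : cs <> [::] -> Permutation cs cs' -> ordl cs' L ->
    ord (PNode X cs) (map (setU X) L)
| ordQ ss ss' L : (ss' = ss \/ ss' = rev ss) -> ordq ss' L -> ord (QNode ss) L
with ordl : seq (mpq V) -> seq {set V} -> Prop :=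
| ordl0 : ordl [::] [::]
| ordlc c cs L1 L2 : ord c L1 -> ordl cs L2 -> ordl (c :: cs) (L1 ++ L2)
with ordq : seq ({set V} * option (mpq V)) -> seq {set V} -> Prop :=
| ordq0 : ordq [::] [::]
| ordqN Si ss L : ordq ss L -> ordq ((Si, None) :: ss) (Si :: L)
| ordqS Si c ss L1 L2 : ord c L1 -> ordq ss L2 ->
    ordq ((Si, Some c) :: ss) (map (setU Si) L1 ++ L2).

Definition inV t q i (v : V) : Prop := exists a, inode t (q ++ i :: a) v.

Definition is_MPQ (adj : rel V) t : Prop :=
  (forall v, exists a, inode t a v /\ forall a', inode t a' v -> a' = a) /\
  (forall a ss, subt t a = Some (QNode ss) ->
     3 <= size ss /\
     forall v, (exists i, i < size ss /\ v \in section ss i) ->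
       exists l r, l < r /\ r < size ss /\
         forall i, i < size ss -> (v \in section ss i <-> l <= i /\ i <= r)) /\
  (forall p C, cliq t p = Some C -> is_maxclique adj C) /\
  (forall p p' C, cliq t p = Some C -> cliq t p' = Some C -> p = p') /\
  (forall C, is_maxclique adj C -> exists p, cliq t p = Some C) /\
  (forall L, ord t L <-> consecutive_order adj L) /\
  (* properties (a)-(f) of Q-nodes (0-based positions 0..k-1) *)
  (forall q ss, subt t q = Some (QNode ss) ->
     let k := size ss in
     let Sec := section ss in
     (exists v, inV t q 0 v) /\ (exists v, inV t q k.-1 v) /\
     Sec 0 \subset Sec 1 /\ Sec k.-1 \subset Sec k.-2 /\
     (forall i, 0 < i -> i < k ->
        Sec i.-1 :&: Sec i != set0 /\
        Sec i.-1 != Sec i /\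
        (exists v, (v \in Sec i.-1 \/ inV t q i.-1 v) /\ v \notin Sec i) /\
                  (exists v, (v \in Sec i \/ inV t q i v) /\ v \notin Sec i.-1)) /\
     (forall i, 0 < i -> i < k.-1 ->
        (Sec i :&: Sec i.+1) :\: Sec 0 != set0 /\
        (Sec i.-1 :&: Sec i) :\: Sec k.-1 != set0)) /\
  (forall a i cs cs', subt t a = Some (PNode set0 cs) ->
     subt t (rcons a i) <> Some (PNode set0 cs')) /\
  (forall a S S' cs', subt t a <> Some (PNode S [:: PNode S' cs'])).
  (* (i) holds by construction: child subtrees of P-nodes are trees *)

(* the <x,y>-tree-path n_1 = node(x), ..., n_t = node(y) consists of the
   prefixes of ay of length >= size ax; it goes through a central section
   if some inner node n_i (1<i<t) is a Q-node and n_(i+1) lies in T_a for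
   a central position a (0 < a < k-1 in 0-based indexing). *)
Definition through_central t (ax ay : seq nat) : Prop :=
  exists m, size ax < m /\ m < size ay /\
    exists ss, subt t (take m ay) = Some (QNode ss) /\
      0 < nth 0 ay m /\ nth 0 ay m < (size ss).-1.

Definition almost_rotable t (ax ay : seq nat) : Prop :=
  ~ through_central t ax ay /\ exists S, subt t ay = Some (PNode S [::]).

End Trees.

From Stdlib Require Import Classical.
From mathcomp Require Import all_boot zify.

Set Implicit Arguments.
Unset Strict Implicit.
Unset Printing Implicit Defensive.

(* In [G - xy] the vertices [x] and [y] are no longer adjacent, and interval graphs
   contain neither induced 4-cycles nor asteroidal triples.  If [node y] is not a leaf,
   two maximal cliques through [node y] contain both [x] and [y] and branch at two
   children of a P-node or at two consecutive positions of a Q-node; vertices [u] and [w]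
   private to either clique are non-adjacent, so [x u y w] is an induced 4-cycle of
   [G - xy].  If the tree path passes a Q-node through a central position [a], pick [u]
   below its first and [w] below its last position: both are adjacent to [x], and by
   property (e) the sections [S_a, ..., S_k] are chained by vertices outside [S_1]
   (which are non-adjacent to [u]), and [S_1, ..., S_a] by vertices outside [S_k].  This
   joins [y] to [w] avoiding [N[u]] and [u] to [y] avoiding [N[w]], while [u x w] avoids
   [N[y]] in [G - xy]: {u, w, y} is an asteroidal triple. *)

Section IntervalGraphs.
Variable V : finType.
Implicit Types (adj : rel V) (D : pred V) (K : {set V}).

Definition nonnbr adj (c : V) : pred V := [pred v | (c != v) && ~~ adj c v].

Definition induced adj D : rel V := [rel a b | [&& a \in D, b \in D & adj a b]].

Section Model.
Variables (adj : rel V) (l r : V -> nat).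
Hypotheses (lr : forall u, l u <= r u)
  (model : forall u v, u != v -> (adj u v <-> l u <= r v /\ l v <= r u)).

Lemma model_adj u v : u != v -> adj u v -> l u <= r v /\ l v <= r u.
Proof. by move=> /model uv /uv. Qed.

Lemma model_nadj u v : u != v -> ~~ adj u v -> r u < l v \/ r v < l u.
Proof.
move=> /model uv /negP nuv.
by case: (leqP (l v) (r u)) => ?; case: (leqP (l u) (r v)) => ?; try lia; case: nuv; apply/uv.
Qed.

Lemma model_left_closed c : closed (induced adj (nonnbr adj c)) [pred v | r v < l c].
Proof.
move=> a b /and3P[/andP[ca /(model_nadj ca) ?] /andP[cb /(model_nadj cb) ?] ab].
rewrite !inE; have [->//|/model_adj/(_ ab) ?] := eqVneq a b.
have := lr a; have := lr b; have := lr c.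
lia.
Qed.

End Model.

Lemma interval_graph_C4_free adj a b c d :
  is_interval_graph adj -> a != c -> b != d ->
  adj a b -> adj b c -> adj c d -> adj d a -> adj a c || adj b d.
Proof.
case=> l [r [lr model]] ac bd ab bc cd da.
have sym u v : u != v -> adj u v -> adj v u.
  by move=> uv /(model_adj model uv) ?; apply/model; rewrite 1?eq_sym //; lia.
have ca : c != a by rewrite eq_sym.
have [eab|nab] := eqVneq a b; first by rewrite eab bc.
have [ebc|nbc] := eqVneq b c; first by rewrite ebc cd orbT.
have [ecd|ncd] := eqVneq c d; first by rewrite sym // ecd.
have [eda|nda] := eqVneq d a; first by rewrite sym // -eda.
apply/negPn/negP; rewrite negb_or => /andP[/(model_nadj model ac) + /(model_nadj model bd)].
move: (model_adj model nab ab) (model_adj model nbc bc).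
move: (model_adj model ncd cd) (model_adj model nda da).
by move: (lr a) (lr b) (lr c) (lr d); clear; lia.
Qed.

Lemma interval_graph_no_asteroidal_triple adj a b c :
  is_interval_graph adj ->
  b \in nonnbr adj a -> c \in nonnbr adj b -> a \in nonnbr adj c ->
  connect (induced adj (nonnbr adj c)) a b ->
  connect (induced adj (nonnbr adj a)) b c ->
  connect (induced adj (nonnbr adj b)) c a -> False.
Proof.
case=> l [r [lr model]].
move=> /andP[ab /(model_nadj model ab) ?] /andP[bc /(model_nadj model bc) ?].
move=> /andP[ca /(model_nadj model ca) ?].
move=> /(closed_connect (model_left_closed (c := c) lr model)) left_c.
move=> /(closed_connect (model_left_closed (c := a) lr model)) left_a.
move=> /(closed_connect (model_left_closed (c := b) lr model)) left_b.
rewrite !inE in left_a left_b left_c; have := lr a; have := lr b; have := lr c.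
lia.
Qed.

Definition cliqueb adj K := [forall u in K, forall v in K, (u != v) ==> adj u v].

Lemma cliqueP adj K : reflect (is_clique adj K) (cliqueb adj K).
Proof.
apply: (iffP forall_inP) => [cl u v uK vK|cl u uK].
  by move: (cl u uK) => /forall_inP/(_ v vK)/implyP.
by apply/forall_inP => v vK; apply/implyP; apply: cl.
Qed.

Lemma maxclique_exists adj K : is_clique adj K -> exists2 M, is_maxclique adj M & K \subset M.
Proof.
move/cliqueP => cK; have [M /maxsetP[/cliqueP cM maxM] KM] := maxset_exists cK.
by exists M => //; split=> // K' /cliqueP; apply: maxM.
Qed.

Lemma connect_clique_chain adj D (K : nat -> {set V}) lo hi :
  (forall i, is_clique adj (K i)) -> lo < hi ->
  (forall i, lo <= i < hi -> exists2 s, s \in K i :&: K i.+1 & s \in D) ->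
  exists s s', [/\ s \in K lo, s' \in K hi, s \in D, s' \in D & connect (induced adj D) s s'].
Proof.
move=> cl; elim: hi => // hi IH; rewrite ltnS leq_eqVlt => /orP[/eqP <-|lo_hi] link.
  case: (link lo) => [|s /setIP[s_lo s_hi] sD]; first by rewrite leqnn /=.
  by exists s, s.
have [|s [s' [s_lo s'_hi sD s'D ss']]] := IH lo_hi.
  by move=> i /andP[loi ihi]; apply: link; rewrite loi ltnW.
case: (link hi) => [|s'' /setIP[s''_hi s''_hi1] s''D]; first by rewrite ltnW //= ltnSn.
exists s, s''; split=> //; apply: connect_trans ss' _.
have [<-//|ne] := eqVneq s' s''.
by apply/connect1/and3P; split=> //; apply: (cl hi).
Qed.

Section RemoveEdge.
Variables (adj : rel V) (x y : V).
Hypotheses (adj_sym : symmetric adj) (adj_irr : irreflexive adj) (x_neq_y : x != y).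
Local Notation adj' := (remove_edge adj x y).

Lemma remove_edge_l u v : u != x -> u != y -> adj' u v = adj u v.
Proof. by move=> /negbTE ux /negbTE uy; rewrite /remove_edge ux uy andbT. Qed.

Lemma remove_edge_r u v : v != x -> v != y -> adj' u v = adj u v.
Proof. by move=> /negbTE vx /negbTE vy; rewrite /remove_edge vx vy !andbF andbT. Qed.

Lemma remove_edge_off_x u v : u != x -> v != x -> adj' u v = adj u v.
Proof. by move=> /negbTE ux /negbTE vx; rewrite /remove_edge ux vx !andbF andbT. Qed.

Lemma remove_edge_xy : adj' x y = false.
Proof. by rewrite /remove_edge !eqxx andbF. Qed.

Lemma remove_edge_yx : adj' y x = false.
Proof. by rewrite /remove_edge !eqxx orbT andbF. Qed.

Lemma nonnbr_remove_edge c v : c != x -> c != y -> (v \in nonnbr adj' c) = (v \in nonnbr adj c).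
Proof. by move=> cx cy; rewrite !inE remove_edge_l. Qed.

(* [x] is a neighbour of [c], so paths avoiding the neighbourhood of [c] never use
   the removed edge. *)
Lemma connect_remove_edge c a b : c != x -> c != y -> adj c x ->
  connect (induced adj (nonnbr adj c)) a b -> connect (induced adj' (nonnbr adj' c)) a b.
Proof.
move=> cx cy cxa; apply: connect_sub => a' b' /and3P[a'D b'D a'b'].
have nx v : v \in nonnbr adj c -> v != x by case/andP=> _; apply: contraNneq => ->.
apply/connect1/and3P; rewrite !nonnbr_remove_edge // remove_edge_off_x //; exact: nx.
Qed.

Lemma remove_edge_C4 u w : is_interval_graph adj' ->
  [/\ u != x, u != y, w != x, w != y & u != w] ->
  [/\ adj x u, adj u y, adj y w, adj w x & ~~ adj u w] -> False.
Proof.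
move=> Gi [ux uy wx wy uw] [xu uy' yw wx' nuw].
have := interval_graph_C4_free Gi x_neq_y uw.
rewrite remove_edge_r // remove_edge_l // remove_edge_r // remove_edge_l //.
by rewrite remove_edge_xy remove_edge_l // (negbTE nuw) => /(_ xu uy' yw wx').
Qed.

Lemma remove_edge_asteroidal u w : is_interval_graph adj' ->
  [/\ adj x u, adj x w, u \in nonnbr adj y, w \in nonnbr adj y & u \in nonnbr adj w] ->
  connect (induced adj (nonnbr adj u)) y w -> connect (induced adj (nonnbr adj w)) u y -> False.
Proof.
move=> Gi [xu xw uD wD uwD] cu cw.
have ux : u != x by apply: contraTneq xu => ->; rewrite adj_irr.
have wx : w != x by apply: contraTneq xw => ->; rewrite adj_irr.
have [uy wy] : u != y /\ w != y.
  by move: uD wD; rewrite !inE => /andP[+ _] /andP[+ _]; rewrite !(eq_sym y).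
have uD' : u \in nonnbr adj' y by move: uD; rewrite !inE remove_edge_r.
have wD' : w \in nonnbr adj' y by move: wD; rewrite !inE remove_edge_r.
have xD' : x \in nonnbr adj' y by rewrite inE eq_sym x_neq_y remove_edge_yx.
apply: (interval_graph_no_asteroidal_triple (a := w) (b := u) (c := y) Gi).
- by rewrite nonnbr_remove_edge.
- by rewrite nonnbr_remove_edge // inE (eq_sym u) (adj_sym u).
- exact: wD'.
- apply: (connect_trans (y := x)); apply/connect1/and3P; split=> //.
    by rewrite remove_edge_l // adj_sym.
  by rewrite remove_edge_r.
- by apply: (connect_remove_edge wx wy _ cw); rewrite adj_sym.
- by apply: (connect_remove_edge ux uy _ cu); rewrite adj_sym.
Qed.

End RemoveEdge.

End IntervalGraphs.

Section Prefixes.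
Variable T : eqType.
Implicit Types (s p : seq T).

Lemma prefix_shorter s1 s2 p :
  prefix s1 p -> prefix s2 p -> size s1 <= size s2 -> prefix s1 s2.
Proof.
move=> /prefixP[p1 ->] /prefixP[p2 e] le12.
by rewrite prefixE -(takel_cat p2 le12) -e take_size_cat.
Qed.

Lemma prefix_size_lt s1 s2 : prefix s1 s2 -> s1 != s2 -> size s1 < size s2.
Proof.
move=> p12 ne; rewrite ltn_neqAle size_prefix // andbT; apply: contra ne => /eqP e.
by move: p12; rewrite prefixE e take_size eq_sym.
Qed.

Lemma prefix_rcons_inj s x1 x2 p : prefix (rcons s x1) p -> prefix (rcons s x2) p -> x1 = x2.
Proof.
move=> h1 h2; have := prefix_shorter h1 h2; rewrite !size_rcons leqnn => /(_ isT).
by rewrite prefixE size_rcons -(size_rcons s x2) take_size => /eqP/rcons_inj[].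
Qed.

Lemma prefix_rcons_cat s x p : prefix (rcons s x) (s ++ x :: p).
Proof. by rewrite -cat_rcons prefix_prefix. Qed.

Lemma nth_prefix x0 s p i : prefix s p -> i < size s -> nth x0 p i = nth x0 s i.
Proof. by move=> /prefixP[p' ->] lt; rewrite nth_cat lt. Qed.

Lemma prefix_rcons_nth x0 s x p : prefix (rcons s x) p -> size s < size p /\ nth x0 p (size s) = x.
Proof.
move=> sp; have lt : size s < size (rcons s x) by rewrite size_rcons.
by rewrite (nth_prefix _ sp lt) nth_rcons ltnn eqxx (leq_trans lt (size_prefix sp)).
Qed.

Lemma exists_prefix_cons (P : seq T -> Prop) i p :
  (exists a, prefix a (i :: p) /\ P a) <-> P [::] \/ exists a, prefix a p /\ P (i :: a).
Proof.
split=> [[[|j a] [/= + Pa]]|[P0|[a [pa Pa]]]]; first by left.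
- by case/andP=> /eqP <- pa; right; exists a.
- by exists [::].
- by exists (i :: a); rewrite /= eqxx.
Qed.

End Prefixes.

Section Paths.
Variable V : finType.
Implicit Types (t s : mpq V) (a b p q : seq nat) (ss : seq ({set V} * option (mpq V))).

Lemma subt_cat t a b : subt t (a ++ b) = obind (fun s => subt s b) (subt t a).
Proof.
elim: a t => [|i a IH] [X cs|ss] //=.
- by case: (onth cs i).
- by case: (onth ss i) => [[Si [c|]]|] //=; apply: IH.
Qed.

Lemma mem_section_size ss i (v : V) : v \in section ss i -> i < size ss.
Proof. by rewrite /section; case: ltnP => // ?; rewrite nth_default // inE. Qed.

Lemma section_onth ss i S o : onth ss i = Some (S, o) -> section ss i = S.
Proof. by rewrite /section => /(onth_nth (set0, None)) ->. Qed.

(* The node at address [a] puts [v] into the clique of a path [p] through it. *)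
Definition assigned t a p (v : V) : Prop :=
  (exists S cs, subt t a = Some (PNode S cs) /\ v \in S) \/
  (exists ss, [/\ subt t a = Some (QNode ss), size a < size p
                & v \in section ss (nth 0 p (size a))]).

Lemma assigned_inode t a p v : assigned t a p v -> inode t a v.
Proof.
case=> [|[ss [Ea _ vS]]]; first by left.
by right; exists ss; split=> //; exists (nth 0 p (size a)); rewrite (mem_section_size vS).
Qed.

Lemma assignedQ t q ss p v : subt t q = Some (QNode ss) ->
  assigned t q p v <-> size q < size p /\ v \in section ss (nth 0 p (size q)).
Proof.
move=> Eq; split=> [[[S [cs [E _]]]|[ss' [E lt vS]]]|[lt vS]]; last by right; exists ss.
  by rewrite Eq in E.
by move: E; rewrite Eq => -[->].
Qed.

Lemma assigned_cons t i c a p v :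
  subt t [:: i] = Some c -> assigned t (i :: a) (i :: p) v <-> assigned c a p v.
Proof. by move=> Ec; rewrite /assigned -cat1s subt_cat Ec. Qed.

Lemma assigned_prefix t a b p p' v : prefix b p -> prefix b p' -> size a < size b ->
  assigned t a p v -> assigned t a p' v.
Proof.
move=> bp bp' ab [|[ss [Ea _]]]; first by left.
rewrite (nth_prefix _ bp ab) -(nth_prefix _ bp' ab) => vS; right; exists ss; split=> //.
exact: leq_trans ab (size_prefix bp').
Qed.

Lemma assigned_nilP X cs p v : assigned (PNode X cs) [::] p v <-> v \in X.
Proof. by split=> [[[S [cs' [[<- _] //]]]|[ss [//]]]|vX]; left; exists X, cs. Qed.

Lemma assigned_nilQ ss i p v : assigned (QNode ss) [::] (i :: p) v <-> v \in section ss i.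
Proof. by split=> [[[S [cs [//]]]|[ss' [[<-] //]]]|vS]; right; exists ss. Qed.

Lemma exists_assigned_cons t i c p v : subt t [:: i] = Some c ->
  (exists a, prefix a (i :: p) /\ assigned t a (i :: p) v) <->
  assigned t [::] (i :: p) v \/ exists a, prefix a p /\ assigned c a p v.
Proof.
move=> Ec; rewrite exists_prefix_cons.
by split=> -[|[a [pa /(assigned_cons _ _ _ Ec) ?]]]; by [left | right; exists a].
Qed.

Lemma mem_cliq t p C v :
  cliq t p = Some C -> v \in C <-> exists a, prefix a p /\ assigned t a p v.
Proof.
elim: p t C => [|i p IH] [X cs|ss] C E; simpl in E => //.
- case: cs E => // -[<-]; split=> [vX|[a []]]; last by rewrite prefixs0 => /eqP -> /assigned_nilP.
  by exists [::]; split=> //; apply/assigned_nilP.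
- case Ec: (onth cs i) E => [c|] //=; case Ecl: (cliq c p) => [C'|] //= [<-].
  rewrite exists_assigned_cons /= ?Ec // assigned_nilP -(IH _ _ Ecl) inE.
  by split=> /orP.
- case Ec: (onth ss i) E => [[Si [c|]]|] //=.
  + case Ecl: (cliq c p) => [C'|] //= [<-].
    rewrite exists_assigned_cons /= ?Ec // assigned_nilQ (section_onth Ec) -(IH _ _ Ecl) inE.
    by split=> /orP.
  + case: p IH => // _ [<-]; rewrite -(section_onth Ec).
    split=> [vS|[[|j a] [+ va]]]; first by exists [::]; split=> //; apply/assigned_nilQ.
    * by move=> _; move/assigned_nilQ: va.
    * case/andP=> /eqP ej _; subst j.
      by case: va => [[S [cs []]]|[ss' []]]; rewrite /= Ec.
Qed.

Lemma mem_cliq_Pnode t a S cs p C v : subt t a = Some (PNode S cs) -> v \in S ->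
  prefix a p -> cliq t p = Some C -> v \in C.
Proof. by move=> Ea vS ap /mem_cliq ->; exists a; split=> //; left; exists S, cs. Qed.

Lemma mem_cliq_section t q ss j p C v : subt t q = Some (QNode ss) -> v \in section ss j ->
  prefix (rcons q j) p -> cliq t p = Some C -> v \in C.
Proof.
move=> Eq vS qjp /mem_cliq ->; exists q; split; first exact: prefix_trans (prefix_rcons q j) qjp.
by apply/(assignedQ _ _ Eq); have [-> ->] := prefix_rcons_nth 0 qjp.
Qed.

Lemma cliq_cat t a s r C :
  subt t a = Some s -> cliq s r = Some C -> exists C', cliq t (a ++ r) = Some C'.
Proof.
elim: a t => [|i a IH] t /=; first by case=> ->; exists C.
case: t => [X cs|ss] /=.
- by case: (onth cs i) => //= c /IH sub /sub [C' ->]; exists (X :|: C').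
- by case: (onth ss i) => //= -[Si [c|//]] /IH sub /sub [C' ->]; exists (Si :|: C').
Qed.

(* Structural recursion on the first child suffices to reach a leaf. *)
Lemma cliq_exists : forall s,
  (forall b ss, subt s b = Some (QNode ss) -> 0 < size ss) -> exists r C, cliq s r = Some C.
Proof.
fix IH 1.
case=> [X [|c cs]|[|[Si [c|]] ss]] nonempty.
- by exists [::], X.
- have [r [C Er]] := IH c (fun b => nonempty (0 :: b)).
  by exists (0 :: r), (X :|: C); rewrite /= Er.
- by have := nonempty [::] [::] erefl.
- have [r [C Er]] := IH c (fun b => nonempty (0 :: b)).
  by exists (0 :: r), (Si :|: C); rewrite /= Er.
- by exists [:: 0], Si.
Qed.

End Paths.

Section MPQ.
Variables (V : finType) (adj : rel V) (t : mpq V).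
Hypotheses (adj_sym : symmetric adj) (t_mpq : is_MPQ adj t).
Implicit Types (a b p q r : seq nat) (ss : seq ({set V} * option (mpq V))) (u v w : V).

Lemma inode_unique v a a' : inode t a v -> inode t a' v -> a = a'.
Proof. by case: t_mpq => uniq _; have [a0 [_ eq]] := uniq v => /eq -> /eq ->. Qed.

Lemma inode_exists v : exists a, inode t a v.
Proof. by case: t_mpq => uniq _; have [a [va _]] := uniq v; exists a. Qed.

Lemma Qnode_size q ss : subt t q = Some (QNode ss) -> 3 <= size ss.
Proof. by case: t_mpq => _ [Q _] /Q []. Qed.

Lemma section_interval q ss v i : subt t q = Some (QNode ss) -> v \in section ss i ->
  exists lo hi, [/\ lo < hi, hi < size ss &
    forall j, j < size ss -> v \in section ss j <-> lo <= j <= hi].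
Proof.
case: t_mpq => _ [Q _] /Q [_ interval] vi.
have [lo [hi [lohi [hik loP]]]] := interval v (ex_intro _ i (conj (mem_section_size vi) vi)).
by exists lo, hi; split=> // j /loP ->; split=> [[-> ->]|/andP[-> ->]].
Qed.

Lemma section_convex q ss v i j k : subt t q = Some (QNode ss) ->
  v \in section ss i -> v \in section ss k -> i <= j <= k -> v \in section ss j.
Proof.
move=> Qq vi vk /andP[ij jk]; have [lo [hi [_ _ loP]]] := section_interval Qq vi.
have /andP[loi _] := (loP _ (mem_section_size vi)).1 vi.
have /andP[_ khi] := (loP _ (mem_section_size vk)).1 vk.
apply/loP; first exact: leq_ltn_trans jk (mem_section_size vk).
by rewrite (leq_trans loi ij) (leq_trans jk khi).
Qed.

Lemma section_succ q ss v i : subt t q = Some (QNode ss) -> v \in section ss i ->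
  exists l, v \in section ss l /\ v \in section ss l.+1.
Proof.
move=> Qq vi; have [lo [hi [lohi hik loP]]] := section_interval Qq vi.
exists lo; split; apply/loP.
- exact: ltn_trans lohi hik.
- by rewrite leqnn (ltnW lohi).
- exact: leq_ltn_trans lohi hik.
- by rewrite leqnSn lohi.
Qed.

Lemma cliq_maxclique p C : cliq t p = Some C -> is_maxclique adj C.
Proof. by case: t_mpq => _ [_ [max _]] /max. Qed.

Lemma cliq_inj p p' C : cliq t p = Some C -> cliq t p' = Some C -> p = p'.
Proof. by case: t_mpq => _ [_ [_ [inj _]]] /inj eq /eq. Qed.

Lemma maxclique_cliq C : is_maxclique adj C -> exists p, cliq t p = Some C.
Proof. by case: t_mpq => _ [_ [_ [_ [surj _]]]] /surj. Qed.

Lemma Qnode_outer_subtrees q ss : subt t q = Some (QNode ss) ->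
  (exists v, inV t q 0 v) /\ (exists v, inV t q (size ss).-1 v).
Proof. by case: t_mpq => _ [_ [_ [_ [_ [_ [Qprops _]]]]]] /Qprops [? [? _]]. Qed.

Lemma Qnode_inner_overlap q ss i : subt t q = Some (QNode ss) -> 0 < i < (size ss).-1 ->
  (section ss i :&: section ss i.+1) :\: section ss 0 != set0 /\
  (section ss i.-1 :&: section ss i) :\: section ss (size ss).-1 != set0.
Proof.
case: t_mpq => _ [_ [_ [_ [_ [_ [Qprops _]]]]]] /Qprops [_ [_ [_ [_ [_ overlap]]]]] /andP[].
exact: overlap.
Qed.

Lemma no_lone_Pchild a S S' cs : subt t a <> Some (PNode S [:: PNode S' cs]).
Proof. by case: t_mpq => _ [_ [_ [_ [_ [_ [_ [_ lone]]]]]]]; apply: lone. Qed.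

Lemma cliq_below a s : subt t a = Some s -> exists r C, cliq t (a ++ r) = Some C.
Proof.
move=> Ea; have [r [C Er]] : exists r C, cliq s r = Some C.
  apply: cliq_exists => b ss Eb; suff /Qnode_size : subt t (a ++ b) = Some (QNode ss).
    by case: (size ss).
  by rewrite subt_cat Ea.
by have [C' ?] := cliq_cat Ea Er; exists r, C'.
Qed.

Lemma cliq_through_Qnode q ss j : subt t q = Some (QNode ss) -> j < size ss ->
  exists r C, cliq t (q ++ j :: r) = Some C.
Proof.
move=> Qq jlt; case Ej: (onth ss j) => [[Sj [c|]]|];
  last by move: (onthNE ss j); rewrite Ej leqNgt jlt.
- have Ec : subt t (q ++ [:: j]) = Some c by rewrite subt_cat Qq /= Ej.
  by have [r [C]] := cliq_below Ec; rewrite -catA; exists r, C.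
- have [|C EC] := cliq_cat (r := [:: j]) (C := Sj) Qq; first by rewrite /= Ej.
  by exists [::], C.
Qed.

Lemma cliq_through_Pnode q S cs j : subt t q = Some (PNode S cs) -> j < size cs ->
  exists r C, cliq t (q ++ j :: r) = Some C.
Proof.
move=> Pq jlt; case Ej: (onth cs j) => [c|];
  last by move: (onthNE cs j); rewrite Ej leqNgt jlt.
have Ec : subt t (q ++ [:: j]) = Some c by rewrite subt_cat Pq /= Ej.
by have [r [C]] := cliq_below Ec; rewrite -catA; exists r, C.
Qed.

Lemma mem_cliq_node v a p C : inode t a v -> cliq t p = Some C ->
  v \in C <-> prefix a p /\ assigned t a p v.
Proof.
move=> va Ep; rewrite (mem_cliq v Ep); split=> [[a' [pa' va']]|[]]; last by exists a.
by rewrite (inode_unique va (assigned_inode va')).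
Qed.

Lemma inode_cliq v a : inode t a v -> exists p C, [/\ cliq t p = Some C, prefix a p & v \in C].
Proof.
case=> [[S [cs [Ea vS]]]|[ss [Ea [i [ilt vS]]]]].
- have [r [C Er]] := cliq_below Ea; exists (a ++ r), C.
  by split; [|apply: prefix_prefix|apply: mem_cliq_Pnode Ea vS (prefix_prefix a r) Er].
- have [r [C Er]] := cliq_through_Qnode Ea ilt; exists (a ++ i :: r), C.
  split; [by []|exact: prefix_prefix|].
  exact: mem_cliq_section Ea vS (prefix_rcons_cat a i r) Er.
Qed.

Lemma cliq_adj p C u v : cliq t p = Some C -> u \in C -> v \in C -> u != v -> adj u v.
Proof. by move=> /cliq_maxclique[cl _]; apply: cl. Qed.

Lemma adj_cliq u v : adj u v -> exists p C, [/\ cliq t p = Some C, u \in C & v \in C].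
Proof.
move=> uv; have [|M maxM uvM] := @maxclique_exists _ adj [set u; v].
  by move=> a b; rewrite !inE => /orP[]/eqP-> /orP[]/eqP->; rewrite ?eqxx // adj_sym.
have [p Ep] := maxclique_cliq maxM.
by exists p, M; split=> //; apply: (subsetP uvM); rewrite !inE eqxx ?orbT.
Qed.

Lemma cliq_not_subset p p' C C' : cliq t p = Some C -> cliq t p' = Some C' -> p != p' ->
  exists2 u, u \in C & u \notin C'.
Proof.
move=> Ep Ep' ne; have [sub|/subsetPn//] := boolP (C \subset C').
have [_ maxC] := cliq_maxclique Ep; have [clC' _] := cliq_maxclique Ep'.
by rewrite (maxC _ clC' sub) in Ep'; rewrite (cliq_inj Ep Ep') eqxx in ne.
Qed.

Lemma inV_inode_prefix q j v a : inV t q j v -> inode t a v -> prefix (rcons q j) a.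
Proof. by case=> b vb /(inode_unique vb) <-; apply: prefix_rcons_cat. Qed.

Lemma inV_cliq_prefix q j v p C : inV t q j v -> cliq t p = Some C -> v \in C ->
  prefix (rcons q j) p.
Proof.
move=> vj Ep vC; case: (vj) => b vb.
have [bp _] := (mem_cliq_node vb Ep).1 vC.
exact: prefix_trans (inV_inode_prefix vj vb) bp.
Qed.

Lemma inV_neq q j v a w : inV t q j v -> inode t a w -> size a <= size q -> v != w.
Proof.
move=> vj wa le; apply/eqP => evw; subst w.
by have := size_prefix (inV_inode_prefix vj wa); rewrite size_rcons ltnNge le.
Qed.

Lemma inV_neq_inV q j j' v v' : inV t q j v -> inV t q j' v' -> j != j' -> v != v'.
Proof.
move=> vj [b vb] ne; apply: contraNneq ne => evv; subst v'.
by apply/eqP; apply: prefix_rcons_inj (inV_inode_prefix vj vb) (prefix_rcons_cat q j' b).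
Qed.

Lemma inV_nadj q j j' v v' : inV t q j v -> inV t q j' v' -> j != j' -> ~~ adj v v'.
Proof.
move=> vj vj' ne; apply/negP => /adj_cliq[p [C [Ep vC vC']]].
by rewrite (prefix_rcons_inj (inV_cliq_prefix vj Ep vC) (inV_cliq_prefix vj' Ep vC')) eqxx in ne.
Qed.

Lemma inV_nonnbr q j j' v v' : inV t q j v -> inV t q j' v' -> j != j' -> v' \in nonnbr adj v.
Proof. by move=> vj vj' ne; rewrite inE (inV_neq_inV vj vj' ne) (inV_nadj vj vj' ne). Qed.

Section Qnode.
Variables (q : seq nat) (ss : seq ({set V} * option (mpq V))).
Hypothesis Qq : subt t q = Some (QNode ss).

Lemma section_inode i s : s \in section ss i -> inode t q s.
Proof. by move=> si; right; exists ss; split=> //; exists i; rewrite (mem_section_size si). Qed.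

Lemma section_clique i : is_clique adj (section ss i).
Proof.
move=> u v ui vi; have [r [C Er]] := cliq_through_Qnode Qq (mem_section_size ui).
by apply: (cliq_adj Er); apply: (mem_cliq_section Qq _ (prefix_rcons_cat q i r) Er).
Qed.

Lemma section_adj_inV j s v : s \in section ss j -> inV t q j v -> adj s v.
Proof.
move=> sj vj; case: (vj) => b vb.
have [p [C [Ep bp vC]]] := inode_cliq vb.
have sC := mem_cliq_section Qq sj (prefix_trans (inV_inode_prefix vj vb) bp) Ep.
by apply: cliq_adj Ep sC vC _; rewrite eq_sym (inV_neq vj (section_inode sj)).
Qed.

Lemma inV_adj_section i j v s : inV t q j v -> s \in section ss i -> adj v s -> s \in section ss j.
Proof.
move=> vj si /adj_cliq[p [C [Ep vC sC]]].
have [_ /(assignedQ _ _ Qq)[_]] := (mem_cliq_node (section_inode si) Ep).1 sC.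
by have [_ ->] := prefix_rcons_nth 0 (inV_cliq_prefix vj Ep vC).
Qed.

Lemma adj_section_common i j u w : u \in section ss i -> w \in section ss j -> adj u w ->
  exists k, u \in section ss k /\ w \in section ss k.
Proof.
move=> ui wj /adj_cliq[p [C [Ep uC wC]]]; exists (nth 0 p (size q)).
have [_ /(assignedQ _ _ Qq)[_ ?]] := (mem_cliq_node (section_inode ui) Ep).1 uC.
by have [_ /(assignedQ _ _ Qq)[_ ?]] := (mem_cliq_node (section_inode wj) Ep).1 wC.
Qed.

Lemma section_nonnbr i j v s : s \in section ss i -> s \notin section ss j -> inV t q j v ->
  s \in nonnbr adj v.
Proof.
move=> si sj vj; rewrite inE (inV_neq vj (section_inode si) (leqnn _)) /=.
by apply: contra sj; apply: (inV_adj_section vj si).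
Qed.

End Qnode.

Definition branching q j0 j1 : Prop :=
  (exists S cs, subt t q = Some (PNode S cs)) /\ j0 != j1 \/
  (exists ss, subt t q = Some (QNode ss)) /\ j1 = j0.+1.

Lemma branching_neq q j0 j1 : branching q j0 j1 -> j0 != j1.
Proof. by case=> [[_ ne]|[_ ->]]; rewrite // neq_ltn ltnSn. Qed.

Lemma cliq_branch_diff q j0 j1 r0 r1 C0 C1 v :
  cliq t (q ++ j0 :: r0) = Some C0 -> cliq t (q ++ j1 :: r1) = Some C1 ->
  v \in C0 -> v \notin C1 ->
  inV t q j0 v \/
  exists ss, [/\ subt t q = Some (QNode ss), v \in section ss j0 & v \notin section ss j1].
Proof.
move=> E0 E1 vC0 vC1; have [a va] := inode_exists v.
have [ap0 av0] := (mem_cliq_node va E0).1 vC0.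
have notC1 : prefix a (q ++ j1 :: r1) -> ~ assigned t a (q ++ j1 :: r1) v.
  by move=> ap1 av1; case/negP: vC1; apply/(mem_cliq_node va E1).
case: (ltngtP (size a) (size q)) => [lt|gt|eq].
- have aq : prefix a q := prefix_shorter ap0 (prefix_prefix q _) (ltnW lt).
  case: (notC1 (prefix_catl _ aq)).
  exact: assigned_prefix (prefix_prefix q _) (prefix_prefix q _) lt av0.
- have le : size (rcons q j0) <= size a by rewrite size_rcons.
  have /prefixP[b ea] := prefix_shorter (prefix_rcons_cat q j0 r0) ap0 le.
  by left; exists b; rewrite -cat_rcons -ea.
- have aq : prefix a q := prefix_shorter ap0 (prefix_prefix q _) (eq_leq eq).
  move: aq av0 notC1; rewrite prefixE eq take_size => /eqP <-.
  case=> [[S [cs [Pq vS]]]|[ss [Qq _ vS]]] notC1.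
    by case: (notC1 (prefix_prefix _ _)); left; exists S, cs.
  right; exists ss; split=> //.
    by have [_ <-] := prefix_rcons_nth 0 (prefix_rcons_cat q j0 r0).
  apply: contra_notN (notC1 (prefix_prefix _ _)) => vS1; apply/(assignedQ _ _ Qq).
  by have [-> ->] := prefix_rcons_nth 0 (prefix_rcons_cat q j1 r1).
Qed.

Lemma branch_nadj q j0 j1 r0 r1 C0 C1 u w : branching q j0 j1 ->
  cliq t (q ++ j0 :: r0) = Some C0 -> cliq t (q ++ j1 :: r1) = Some C1 ->
  u \in C0 -> u \notin C1 -> w \in C1 -> w \notin C0 -> ~~ adj u w.
Proof.
move=> br E0 E1 u0 u1 w1 w0; have ne := branching_neq br.
have [uj0|[ss [Qq u0' u1']]] := cliq_branch_diff E0 E1 u0 u1;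
have [wj1|[ss' [Qq' w1' w0']]] := cliq_branch_diff E1 E0 w1 w0.
- exact: inV_nadj uj0 wj1 ne.
- case: br => [[[S [cs Qq]] _]|_]; first by rewrite Qq in Qq'.
  by apply: contra w0' => /(inV_adj_section Qq' uj0 w1').
- case: br => [[[S [cs Qq']] _]|_]; first by rewrite Qq in Qq'.
  by apply: contra u1' => uw; apply: (inV_adj_section Qq wj1 u0'); rewrite adj_sym.
- move: Qq'; rewrite Qq => -[ess]; subst ss'; case: br => [[[S [cs Qq']] _]|[_ ej1]].
    by rewrite Qq in Qq'.
  apply/negP => /(adj_section_common Qq u0' w1')[k [uk wk]]; subst j1.
  have [kj0|j0k] := leqP k j0.
  + by case/negP: w0'; apply: section_convex Qq wk w1' _; rewrite kj0 leqnSn.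
  + by case/negP: u1'; apply: section_convex Qq u0' uk _; rewrite leqnSn j0k.
Qed.

Lemma branch_C4 q j0 j1 r0 r1 C0 C1 x y : branching q j0 j1 ->
  cliq t (q ++ j0 :: r0) = Some C0 -> cliq t (q ++ j1 :: r1) = Some C1 ->
  x \in C0 -> x \in C1 -> y \in C0 -> y \in C1 ->
  exists u w, [/\ adj x u, adj u y, adj y w, adj w x & ~~ adj u w] /\
              [/\ u != x, u != y, w != x, w != y & u != w].
Proof.
move=> br E0 E1 x0 x1 y0 y1.
have ne : q ++ j0 :: r0 != q ++ j1 :: r1.
  apply: contraNneq (branching_neq br) => e; apply/eqP.
  by have [_ <-] := prefix_rcons_nth 0 (prefix_rcons_cat q j0 r0); rewrite e nth_cat ltnn subnn.
have [u u0 u1] := cliq_not_subset E0 E1 ne.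
rewrite eq_sym in ne; have [w w1 w0] := cliq_not_subset E1 E0 ne.
have ux : u != x by apply: contraNneq u1 => ->.
have uy : u != y by apply: contraNneq u1 => ->.
have wx : w != x by apply: contraNneq w0 => ->.
have wy : w != y by apply: contraNneq w0 => ->.
have uw : u != w by apply: contraNneq u1 => ->.
exists u, w; split; split=> //; last exact: branch_nadj br E0 E1 u0 u1 w1 w0.
- by apply: (cliq_adj E0); rewrite // eq_sym.
- exact: (cliq_adj E0).
- by apply: (cliq_adj E1); rewrite // eq_sym.
- exact: (cliq_adj E1).
Qed.

Lemma branching_below_node y ay : inode t ay y -> ~ (exists S, subt t ay = Some (PNode S [::])) ->
  exists q j0 j1 r0 r1 C0 C1, [/\ branching q j0 j1, prefix ay q,
    cliq t (q ++ j0 :: r0) = Some C0, cliq t (q ++ j1 :: r1) = Some C1 & y \in C0 :&: C1].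
Proof.
case=> [[S [cs [Ey yS]]]|[ss [Ey [i [_ yi]]]]] not_leaf.
- case: cs Ey => [|c [|c' cs]] Ey; first by case: not_leaf; exists S.
  + case: c Ey => [S' cs'|ss'] Ey; first by case: (no_lone_Pchild Ey).
    have Qq : subt t (rcons ay 0) = Some (QNode ss') by rewrite -cats1 subt_cat Ey.
    have k3 := Qnode_size Qq.
    have [r0 [C0 E0]] := cliq_through_Qnode Qq (leq_trans (isT : 0 < 3) k3).
    have [r1 [C1 E1]] := cliq_through_Qnode Qq (leq_trans (isT : 1 < 3) k3).
    exists (rcons ay 0), 0, 1, r0, r1, C0, C1; split=> //.
    * by right; split=> //; exists ss'.
    * exact: prefix_rcons.
    * have yC j r C : cliq t (rcons ay 0 ++ j :: r) = Some C -> y \in C.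
        exact: mem_cliq_Pnode Ey yS (prefix_catl _ (prefix_rcons ay 0)).
      by rewrite inE (yC _ _ _ E0) (yC _ _ _ E1).
  + have [r0 [C0 E0]] := cliq_through_Pnode Ey (isT : 0 < size [:: c, c' & cs]).
    have [r1 [C1 E1]] := cliq_through_Pnode Ey (isT : 1 < size [:: c, c' & cs]).
    exists ay, 0, 1, r0, r1, C0, C1; split=> //.
    * by left; split=> //; exists S, [:: c, c' & cs].
    * exact: prefix_refl.
    * have yC j r C : cliq t (ay ++ j :: r) = Some C -> y \in C.
        exact: mem_cliq_Pnode Ey yS (prefix_prefix _ _).
      by rewrite inE (yC _ _ _ E0) (yC _ _ _ E1).
- have [l [yl yl1]] := section_succ Ey yi.
  have [r0 [C0 E0]] := cliq_through_Qnode Ey (mem_section_size yl).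
  have [r1 [C1 E1]] := cliq_through_Qnode Ey (mem_section_size yl1).
  exists ay, l, l.+1, r0, r1, C0, C1; split=> //.
  + by right; split=> //; exists ss.
  + exact: prefix_refl.
  + rewrite inE (mem_cliq_section Ey yl (prefix_rcons_cat _ _ _) E0).
    exact: mem_cliq_section Ey yl1 (prefix_rcons_cat _ _ _) E1.
Qed.

Section OverX.
Variables (x y : V) (ax ay : seq nat).
Hypotheses (xy : adj x y) (x_ax : inode t ax x) (y_ay : inode t ay y).

(* Adjacency to [y] puts [x] into the section of [node x] chosen towards [y]. *)
Lemma mem_cliq_over b p C : prefix b ay -> size ax < size b -> prefix b p ->
  cliq t p = Some C -> x \in C.
Proof.
move=> bay axb bp Ep; have [p0 [C0 [E0 x0 y0]]] := adj_cliq xy.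
have [ayp0 _] := (mem_cliq_node y_ay E0).1 y0.
have [axp0 xa] := (mem_cliq_node x_ax E0).1 x0.
have bp0 := prefix_trans bay ayp0.
apply/(mem_cliq_node x_ax Ep); split.
- exact: prefix_trans (prefix_shorter axp0 bp0 (ltnW axb)) bp.
- exact: assigned_prefix bp0 bp axb xa.
Qed.

Lemma through_central_Qnode : through_central t ax ay ->
  exists q ss jy, [/\ subt t q = Some (QNode ss), prefix (rcons q jy) ay,
                     size ax < size q & 0 < jy < (size ss).-1].
Proof.
case=> m [axm [may [ss [Qq [y0 yk]]]]]; exists (take m ay), ss, (nth 0 ay m).
by rewrite -take_nth // prefix_take size_takel ?(ltnW may) // y0.
Qed.

Section Central.
Variables (q : seq nat) (ss : seq ({set V} * option (mpq V))) (jy : nat).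
Hypotheses (Qq : subt t q = Some (QNode ss)) (qjy_ay : prefix (rcons q jy) ay)
  (ax_q : size ax < size q) (jy_central : 0 < jy < (size ss).-1).

Lemma inV_central : inV t q jy y.
Proof. by case/prefixP: qjy_ay => b eb; exists b; rewrite -cat_rcons -eb. Qed.

Lemma inV_adj_over j v : inV t q j v -> adj x v.
Proof.
move=> vj; case: (vj) => b vb; have [p [C [Ep bp vC]]] := inode_cliq vb.
apply: (cliq_adj Ep) vC _; last by rewrite eq_sym (inV_neq vj x_ax (ltnW ax_q)).
apply: (mem_cliq_over (b := q)) Ep => //; first exact: prefix_trans (prefix_rcons q jy) qjy_ay.
exact: prefix_trans (prefix_rcons q j) (prefix_trans (inV_inode_prefix vj vb) bp).
Qed.

Lemma connect_to_last u w : inV t q 0 u -> inV t q (size ss).-1 w ->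
  connect (induced adj (nonnbr adj u)) y w.
Proof.
move=> u0 wk; case/andP: jy_central => y0 yk.
have [|s [s' [sa s'k sD s'D ss']]] :=
  connect_clique_chain (D := nonnbr adj u) (section_clique Qq) yk.
  move=> i /andP[yi ik]; have i_central : 0 < i < (size ss).-1 by rewrite (leq_trans y0 yi).
  have [/set0Pn[s] + _] := Qnode_inner_overlap Qq i_central.
  rewrite !inE => /andP[s0 /andP[si si1]]; exists s; first by rewrite inE si si1.
  exact: section_nonnbr si s0 u0.
have yD : y \in nonnbr adj u by apply: inV_nonnbr u0 inV_central _; rewrite eq_sym -lt0n.
have wD : w \in nonnbr adj u.
  by apply: inV_nonnbr u0 wk _; rewrite eq_sym -lt0n (ltn_trans y0 yk).
apply: connect_trans (connect_trans _ ss') _; apply/connect1/and3P; split=> //.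
  by rewrite adj_sym; apply: (section_adj_inV Qq sa inV_central).
exact: (section_adj_inV Qq s'k wk).
Qed.

Lemma connect_from_first u w : inV t q 0 u -> inV t q (size ss).-1 w ->
  connect (induced adj (nonnbr adj w)) u y.
Proof.
move=> u0 wk; case/andP: jy_central => y0 yk.
have [|s [s' [s0 s'y sD s'D ss']]] :=
  connect_clique_chain (D := nonnbr adj w) (section_clique Qq) y0.
  move=> i /andP[_ iy]; have i_central : 0 < i.+1 < (size ss).-1 by rewrite (leq_ltn_trans iy yk).
  have [_ /set0Pn[s]] := Qnode_inner_overlap Qq i_central.
  rewrite !inE => /andP[sk /andP[si si1]]; exists s; first by rewrite inE si si1.
  exact: section_nonnbr si sk wk.
have uD : u \in nonnbr adj w by apply: inV_nonnbr wk u0 _; rewrite -lt0n (ltn_trans y0 yk).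
have yD : y \in nonnbr adj w by apply: inV_nonnbr wk inV_central _; rewrite neq_ltn yk orbT.
apply: connect_trans (connect_trans _ ss') _; apply/connect1/and3P; split=> //.
  by rewrite adj_sym; apply: (section_adj_inV Qq s0 u0).
exact: (section_adj_inV Qq s'y inV_central).
Qed.

End Central.

Lemma central_asteroidal : through_central t ax ay -> exists u w,
  [/\ adj x u, adj x w, u \in nonnbr adj y, w \in nonnbr adj y & u \in nonnbr adj w] /\
  connect (induced adj (nonnbr adj u)) y w /\ connect (induced adj (nonnbr adj w)) u y.
Proof.
case/through_central_Qnode => q [ss [jy [Qq qy axq y_central]]].
have [[u u0] [w wk]] := Qnode_outer_subtrees Qq.
have /andP[y0 yk] := y_central; have k0 := ltn_trans y0 yk.
have yj := inV_central qy.
exists u, w; split; last first.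
  split; first exact: (connect_to_last Qq qy y_central u0 wk).
  exact: (connect_from_first Qq qy y_central u0 wk).
split; [exact: (inV_adj_over qy axq u0) | exact: (inV_adj_over qy axq wk) | | |].
- by apply: (inV_nonnbr yj u0); rewrite -lt0n.
- by apply: (inV_nonnbr yj wk); rewrite neq_ltn yk.
- by apply: (inV_nonnbr wk u0); rewrite -lt0n.
Qed.

End OverX.

End MPQ.

Theorem mainTheorem12 (V : finType) (adj : rel V)
  (adj_sym : symmetric adj) (adj_irr : irreflexive adj)
  (G_int : is_interval_graph adj)
  (t : mpq V) (t_mpq : is_MPQ adj t)
  (x y : V) (ax ay : seq nat)
  (exy : adj x y)
  (hx : inode t ax x) (hy : inode t ay y)
  (x_over_y : prefix ax ay) (hneq : ax <> ay)
  (hnot : ~ almost_rotable t ax ay) :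
  ~ interval_edge adj x y.
Proof.
case=> _ G'_int; have xy : x != y by apply: contraTneq exy => ->; rewrite adj_irr.
have [central|not_central] := classic (through_central t ax ay).
  have [u [w [uw_props [cu cw]]]] := central_asteroidal adj_sym t_mpq exy hx hy central.
  exact: (remove_edge_asteroidal adj_sym adj_irr xy G'_int uw_props cu cw).
have not_leaf : ~ exists S, subt t ay = Some (PNode S [::]) by move=> leaf; apply: hnot.
have [q [j0 [j1 [r0 [r1 [C0 [C1 [br ayq E0 E1 /setIP[y0 y1]]]]]]]]] :=
  branching_below_node t_mpq hy not_leaf.
have ax_lt : size ax < size ay by apply: prefix_size_lt x_over_y _; apply/eqP.
have x_in C r j : cliq t (q ++ j :: r) = Some C -> x \in C.
  exact: (mem_cliq_over adj_sym t_mpq exy hx hy (prefix_refl ay) ax_lt (prefix_catl _ ayq)).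
have [u [w [edges ne]]] := branch_C4 adj_sym t_mpq br E0 E1 (x_in _ _ _ E0) (x_in _ _ _ E1) y0 y1.
exact: (remove_edge_C4 xy G'_int ne edges).
Qed.
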